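(* Every positive definite matrix in $\mathcal{M}_k\otimes\mathcal{M}_m$ belongs to $CR_{k,m}$. Moreover, $CR_{k,m}$ is a convex cone (i.e., $\lambda\gamma\in CR_{k,m}$ and $\gamma+\delta\in CR_{k,m}$ for all $\gamma,\delta\in CR_{k,m}$, $\lambda>0$), it is dense in the set of all states of $\mathcal{M}_k\otimes\mathcal{M}_m$, and it is not closed.
   Context: $\mathcal{M}_k$ denotes the complex $k\times k$ matrices, and $\mathcal{M}_k\otimes\mathcal{M}_m$ is identified with $\mathcal{M}_{km}$ via the Kronecker product. A state is a positive semidefinite Hermitian matrix (not necessarily of trace one). For $\gamma=\sum_{i=1}^nA_i\otimes B_i\in\mathcal{M}_k\otimes\mathcal{M}_m$ define $G_\gamma:\mathcal{M}_k\to\mathcal{M}_m$, $G_\gamma(X)=\sum_i\mathrm{tr}(A_iX)B_i$, and $F_\gamma:\mathcal{M}_m\to\mathcal{M}_k$, $F_\gamma(Y)=\sum_i\mathrm{tr}(B_iY)A_i$. A linear map is positive if it maps positive semidefinite matrices to positive semidefinite matrices, and self-adjoint if self-adjoint with respect to $\langle X,Y\rangle=\mathrm{tr}(XY^* )$. For orthogonal projections $V,W$, $V\mathcal{M}_kW=\{VXW:X\in\mathcal{M}_k\}$. Given an orthogonal projection $V\in\mathcal{M}_k$ and a positive map $T:V\mathcal{M}_kV\to V\mathcal{M}_kV$, $T$ is irreducible if the only orthogonal projections $W$ with $W\mathcal{M}_kW\subseteq V\mathcal{M}_kV$ and $T(W\mathcal{M}_kW)\subseteq W\mathcal{M}_kW$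 are $W=0$ and $W=V$. A self-adjoint positive map $T:\mathcal{M}_k\to\mathcal{M}_k$ is completely reducible if there are orthogonal projections $W_1,\dots,W_l$ with $W_iW_j=0$ for $i\ne j$, $T(W_i\mathcal{M}_kW_i)\subseteq W_i\mathcal{M}_kW_i$ and $T|_{W_i\mathcal{M}_kW_i}$ irreducible for every $i$, and $T|_R\equiv0$, where $R$ is the orthogonal complement (trace inner product) of $\bigoplus_iW_i\mathcal{M}_kW_i$ in $\mathcal{M}_k$. $CR_{k,m}$ is the set of states $\gamma\in\mathcal{M}_k\otimes\mathcal{M}_m$ such that $F_\gamma\circ G_\gamma:\mathcal{M}_k\to\mathcal{M}_k$ is completely reducible. *)

From HB Require Import structures.
From mathcomp Require Import all_boot all_order all_algebra.
From mathcomp Require Import complex mxtens.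
From mathcomp Require Import reals.
Set Implicit Arguments. Unset Strict Implicit. Unset Printing Implicit Defensive.
Import Order.TTheory GRing.Theory Num.Theory.
Local Open Scope ring_scope.

Section Defs.
Variable (R : realType).
Local Notation C := R[i].

Definition adjmx {p q : nat} (A : 'M[C]_(p, q)) : 'M[C]_(q, p) :=
  map_mx (fun z => z^*) A^T.

Definition hermitian {n : nat} (A : 'M[C]_n) : Prop := adjmx A = A.

Definition psd {n : nat} (A : 'M[C]_n) : Prop :=
  hermitian A /\ forall v : 'cV[C]_n, 0 <= (adjmx v *m A *m v) 0 0.

Definition posdef {n : nat} (A : 'M[C]_n) : Prop :=
  hermitian A /\ forall v : 'cV[C]_n, v != 0 -> 0 < (adjmx v *m A *m v) 0 0.

(* states of M_k (x) M_m, identified with M_{km} via the Kronecker product tensmx *)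
Definition state (k m : nat) (g : 'M[C]_(k * m)) : Prop := psd g.

(* G and F attached to a decomposition gamma = sum_i A_i (x) B_i *)
Definition Gdec {k m : nat} (s : seq ('M[C]_k * 'M[C]_m)) (X : 'M[C]_k) : 'M[C]_m :=
  \sum_(p <- s) (\tr (p.1 *m X)) *: p.2.
Definition Fdec {k m : nat} (s : seq ('M[C]_k * 'M[C]_m)) (Y : 'M[C]_m) : 'M[C]_k :=
  \sum_(p <- s) (\tr (p.2 *m Y)) *: p.1.

(* the canonical decomposition gamma = sum g_{(a,b),(a',b')} E_{aa'} (x) E_{bb'} *)
Definition std_dec (k m : nat) (g : 'M[C]_(k * m)) : seq ('M[C]_k * 'M[C]_m) :=
  [seq (g (mxtens_index (x.1.1, x.2.1)) (mxtens_index (x.1.2, x.2.2))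
          *: delta_mx x.1.1 x.1.2, delta_mx x.2.1 x.2.2)
  | x <- enum {: ('I_k * 'I_k) * ('I_m * 'I_m)}].

Definition G_ (k m : nat) (g : 'M[C]_(k * m)) : 'M[C]_k -> 'M[C]_m := Gdec (std_dec g).
Definition F_ (k m : nat) (g : 'M[C]_(k * m)) : 'M[C]_m -> 'M[C]_k := Fdec (std_dec g).

Definition positive_map {k : nat} (T : 'M[C]_k -> 'M[C]_k) : Prop :=
  forall X, psd X -> psd (T X).
Definition selfadjoint_map {k : nat} (T : 'M[C]_k -> 'M[C]_k) : Prop :=
  forall X Y, \tr (T X *m adjmx Y) = \tr (X *m adjmx (T Y)).

Definition orth_proj {k : nat} (W : 'M[C]_k) : Prop := W *m W = W /\ adjmx W = W.

(* T restricted to V M_k V is irreducible (T leaves V M_k V invariant) *)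
Definition irreducible_on {k : nat} (T : 'M[C]_k -> 'M[C]_k) (V : 'M[C]_k) : Prop :=
  forall W : 'M[C]_k, orth_proj W ->
    (forall X, exists Y, W *m X *m W = V *m Y *m V) ->
    (forall X, exists Y, T (W *m X *m W) = W *m Y *m W) ->
    W = 0 \/ W = V.

Definition completely_reducible {k : nat} (T : 'M[C]_k -> 'M[C]_k) : Prop :=
  selfadjoint_map T /\ positive_map T /\
  exists (l : nat) (W : 'I_l -> 'M[C]_k),
    (forall i, orth_proj (W i)) /\
    (forall i j, i != j -> W i *m W j = 0) /\
    (forall i X, exists Y, T (W i *m X *m W i) = W i *m Y *m W i) /\
    (forall i, irreducible_on T (W i)) /\
    (* T vanishes on the orthogonal complement R of (+)_i W_i M_k W_i *)
    (forall X, (forall Z : 'I_l -> 'M[C]_k,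
                  \tr (X *m adjmx (\sum_i W i *m Z i *m W i)) = 0) -> T X = 0).

Definition CR (k m : nat) (g : 'M[C]_(k * m)) : Prop :=
  state g /\ completely_reducible (F_ g \o G_ g).

End Defs.

From Pilot Require Import Defs.
From HB Require Import structures.
From mathcomp Require Import all_boot all_order all_algebra.
From mathcomp Require Import complex mxtens reals ring spectral.
From Stdlib Require Import Classical FunctionalExtensionality.
Set Implicit Arguments. Unset Strict Implicit. Unset Printing Implicit Defensive.
Import Order.TTheory GRing.Theory Num.Theory.
Local Open Scope ring_scope.

(* Writing a state as g = sum_h h h^* and reshaping each h into an m x k matrix
   A_h, the map F_g o G_g becomes T X = sum_{A,B} (A^* B) X (A^* B)^*. The corners
   V M_k V left invariant by T are those of orthogonal projections V commuting
   with every A^* B, so splitting 1 into minimal such projections shows that T is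
   completely reducible iff X |-> sum_A A X A^* kills every corner V X (1 - V).
   This condition survives concatenating and rescaling the families A_h, so CR is
   a convex cone. A positive definite g admits no commuting projection besides 0
   and 1, which gives the first claim and, through g + e I, density; the rank-one
   state of e_00 + e_11 fails the condition while being a limit of such g. *)

Lemma mxtrace_sum (T : pzSemiRingType) n I (r : seq I) (P : pred I) (F : I -> 'M[T]_n) :
  \tr (\sum_(i <- r | P i) F i) = \sum_(i <- r | P i) \tr (F i).
Proof. exact: raddf_sum. Qed.

Lemma mx_neq0 (V : nmodType) p q (A : 'M[V]_(p, q)) : A != 0 -> exists i j, A i j != 0.
Proof.
move=> nA; have /existsP [i /existsP [j nz]] : [exists i, exists j, A i j != 0].
  apply: contraR nA => /existsPn A0; apply/eqP/matrixP => i j; rewrite mxE.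
  by apply/eqP; move/existsPn: (A0 i) => /(_ j); rewrite negbK.
by exists i, j.
Qed.

Lemma col_neq0 (V : nmodType) p q (A : 'M[V]_(p, q)) : A != 0 -> exists j, col j A != 0.
Proof.
move=> /mx_neq0 [i [j nz]]; exists j.
by apply: contraNneq nz => /matrixP /(_ i 0); rewrite !mxE => ->.
Qed.

Section Adjoint.
Variable R : realType.
Local Notation C := R[i].

Lemma adjmxE p q (A : 'M[C]_(p, q)) i j : adjmx A i j = (A j i)^*.
Proof. by rewrite !mxE. Qed.

Lemma adjmxK p q (A : 'M[C]_(p, q)) : adjmx (adjmx A) = A.
Proof. by apply/matrixP => i j; rewrite !adjmxE conjCK. Qed.

Lemma adjmxM p q r (A : 'M[C]_(p, q)) (B : 'M[C]_(q, r)) :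
  adjmx (A *m B) = adjmx B *m adjmx A.
Proof.
apply/matrixP => i j; rewrite adjmxE !mxE rmorph_sum; apply: eq_bigr => l _.
by rewrite rmorphM !adjmxE mulrC.
Qed.

Lemma adjmxD p q (A B : 'M[C]_(p, q)) : adjmx (A + B) = adjmx A + adjmx B.
Proof. by apply/matrixP => i j; rewrite !mxE rmorphD. Qed.

Lemma adjmxN p q (A : 'M[C]_(p, q)) : adjmx (- A) = - adjmx A.
Proof. by apply/matrixP => i j; rewrite !mxE rmorphN. Qed.

Lemma adjmxB p q (A B : 'M[C]_(p, q)) : adjmx (A - B) = adjmx A - adjmx B.
Proof. by rewrite adjmxD adjmxN. Qed.

Lemma adjmxZ p q c (A : 'M[C]_(p, q)) : adjmx (c *: A) = c^* *: adjmx A.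
Proof. by apply/matrixP => i j; rewrite !mxE rmorphM. Qed.

Lemma adjmx0 p q : adjmx (0 : 'M[C]_(p, q)) = 0.
Proof. by apply/matrixP => i j; rewrite !mxE rmorph0. Qed.

Lemma adjmx1 p : adjmx (1%:M : 'M[C]_p) = 1%:M.
Proof. by apply/matrixP => i j; rewrite !mxE rmorph_nat eq_sym. Qed.

Lemma adjmx_sum p q I (r : seq I) (P : pred I) (F : I -> 'M[C]_(p, q)) :
  adjmx (\sum_(i <- r | P i) F i) = \sum_(i <- r | P i) adjmx (F i).
Proof.
apply/matrixP => a b; rewrite adjmxE !summxE rmorph_sum.
by apply: eq_bigr => i _; rewrite adjmxE.
Qed.

Lemma adjmx_delta p q (i : 'I_p) (j : 'I_q) :
  adjmx (delta_mx i j : 'M[C]_(p, q)) = delta_mx j i.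
Proof. by apply/matrixP => a b; rewrite !mxE rmorph_nat andbC. Qed.

Lemma mxtrace_mul_adj p q (A : 'M[C]_(p, q)) :
  \tr (A *m adjmx A) = \sum_i \sum_j A i j * (A i j)^*.
Proof.
by apply: eq_bigr => i _; rewrite mxE; apply: eq_bigr => j _; rewrite adjmxE.
Qed.

Lemma mxtrace_mul_adj_ge0 p q (A : 'M[C]_(p, q)) : 0 <= \tr (A *m adjmx A).
Proof.
rewrite mxtrace_mul_adj; apply: sumr_ge0 => i _; apply: sumr_ge0 => j _.
exact: mul_conjC_ge0.
Qed.

Lemma mxtrace_mul_adj_eq0 p q (A : 'M[C]_(p, q)) :
  \tr (A *m adjmx A) = 0 -> A = 0.
Proof.
move=> trA0; apply/matrixP => i j; rewrite mxE; apply/eqP; rewrite -mul_conjC_eq0.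
have row0 := psumr_eq0P (fun i _ => sumr_ge0 _ (fun j _ => mul_conjC_ge0 (A i j))).
move: trA0; rewrite mxtrace_mul_adj => /row0 /(_ i isT) /psumr_eq0P.
by move=> /(_ (fun j _ => mul_conjC_ge0 (A i j)) j isT) ->.
Qed.

Lemma mxtrace_sum_mul_adj_eq0 p q (I : eqType) (r : seq I) (F : I -> 'M[C]_(p, q)) :
  \tr (\sum_(i <- r) F i *m adjmx (F i)) = 0 -> {in r, forall i, F i = 0}.
Proof.
rewrite mxtrace_sum => /eqP; rewrite psumr_eq0 => [/allP F0 i /F0|i _].
  by rewrite implyTb => /eqP /mxtrace_mul_adj_eq0.
exact: mxtrace_mul_adj_ge0.
Qed.

Lemma mxtrace_sum2_mul_adj_eq0 p q (I J : eqType) (r : seq I) (r' : seq J)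
    (F : I -> J -> 'M[C]_(p, q)) :
  \tr (\sum_(i <- r) \sum_(j <- r') F i j *m adjmx (F i j)) = 0 ->
  forall i j, i \in r -> j \in r' -> F i j = 0.
Proof.
rewrite mxtrace_sum => /eqP; rewrite psumr_eq0 => [/allP F0 i j /F0|i _]; last first.
  by rewrite mxtrace_sum; apply: sumr_ge0 => j _; apply: mxtrace_mul_adj_ge0.
by rewrite implyTb => /eqP /mxtrace_sum_mul_adj_eq0; apply.
Qed.

End Adjoint.

Section OrthProj.
Variable R : realType.
Local Notation C := R[i].

Definition sqnorm p (u : 'cV[C]_p) : C := (adjmx u *m u) 0 0.

Lemma sqnormE p (u : 'cV[C]_p) : sqnorm u = \tr (adjmx u *m adjmx (adjmx u)).
Proof. by rewrite adjmxK trace_mx11. Qed.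

Lemma sqnorm_ge0 p (u : 'cV[C]_p) : 0 <= sqnorm u.
Proof. by rewrite sqnormE mxtrace_mul_adj_ge0. Qed.

Lemma sqnorm_eq0 p (u : 'cV[C]_p) : (sqnorm u == 0) = (u == 0).
Proof.
apply/eqP/eqP => [|->]; last by rewrite /sqnorm mulmx0 mxE.
rewrite sqnormE => /mxtrace_mul_adj_eq0 /(congr1 (@adjmx _ _ _)).
by rewrite adjmxK adjmx0.
Qed.

Lemma adjmx_mulmx_cV p (u : 'cV[C]_p) : adjmx u *m u = (sqnorm u)%:M.
Proof. by apply/matrixP => i j; rewrite !ord1 [RHS]mxE eqxx mulr1n. Qed.

Definition rank1_proj p (u : 'cV[C]_p) := (sqnorm u)^-1 *: (u *m adjmx u).

Lemma rank1_projK p (u : 'cV[C]_p) : u != 0 -> rank1_proj u *m u = u.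
Proof.
rewrite -sqnorm_eq0 => nu; rewrite -scalemxAl -mulmxA adjmx_mulmx_cV.
by rewrite mul_mx_scalar scalerA mulVf // scale1r.
Qed.

Lemma rank1_orth_proj p (u : 'cV[C]_p) : u != 0 -> orth_proj (rank1_proj u).
Proof.
move=> nu; split; first by rewrite -scalemxAr mulmxA rank1_projK.
by rewrite adjmxZ adjmxM adjmxK geC0_conj // invr_ge0 sqnorm_ge0.
Qed.

Lemma orth_proj_mulC k (V : 'M[C]_k) : orth_proj V -> V *m (1%:M - V) = 0.
Proof. by move=> [VV _]; rewrite mulmxBr mulmx1 VV subrr. Qed.

Lemma orth_proj_ltrank k (P V : 'M[C]_k) : orth_proj P -> orth_proj V ->
  V *m P = P -> P <> V -> (\rank P < \rank V)%N.
Proof.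
move=> [PP aP] [VV aV] VP nPV.
have sPV : (P <= V)%MS by rewrite -[P]aP -VP adjmxM aP aV submxMl.
have := mxrank_leqif_sup sPV; rewrite ltn_neqAle => -[-> ->].
rewrite andbT; apply/negP => /submxP [X VX]; apply: nPV.
by rewrite -VP {1}VX -mulmxA PP -VX.
Qed.

Lemma diag_blocks0_orthogonal k l (W : 'I_l -> 'M[C]_k) (Y : 'M[C]_k) :
  (forall i, orth_proj (W i)) -> (forall i, W i *m Y *m W i = 0) ->
  forall Z : 'I_l -> 'M[C]_k, \tr (Y *m adjmx (\sum_i W i *m Z i *m W i)) = 0.
Proof.
move=> pW Y0 Z; rewrite adjmx_sum mulmx_sumr mxtrace_sum big1 // => i _.
rewrite !adjmxM (pW i).2 !mulmxA mxtrace_mulC !mulmxA.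
by rewrite Y0 !mul0mx mxtrace0.
Qed.

Lemma orthogonal_diag_blocks0 k l (W : 'I_l -> 'M[C]_k) (X : 'M[C]_k) i :
  orth_proj (W i) ->
  (forall Z : 'I_l -> 'M[C]_k, \tr (X *m adjmx (\sum_j W j *m Z j *m W j)) = 0) ->
  W i *m X *m W i = 0.
Proof.
move=> [WW aW] /(_ (fun j => if j == i then X else 0)).
rewrite (bigD1 i) //= eqxx big1 => [|j /negbTE->]; last by rewrite mulmx0 mul0mx.
rewrite addr0 !adjmxM aW mxtrace_mulC !mulmxA => tr0.
apply: mxtrace_mul_adj_eq0; rewrite !adjmxM aW !mulmxA -(mulmxA _ (W i) (W i)) WW.
rewrite -tr0 [LHS]mxtrace_mulC !mulmxA WW [RHS]mxtrace_mulC !mulmxA.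
by rewrite [RHS]mxtrace_mulC !mulmxA.
Qed.

Lemma orth_projB k (V W : 'M[C]_k) : orth_proj V -> orth_proj W -> V *m W = W ->
  orth_proj (V - W).
Proof.
move=> [VV aV] [WW aW] VW; have WV : W *m V = W by rewrite -aW -aV -adjmxM VW.
split; last by rewrite adjmxB aV aW.
by rewrite mulmxBl !mulmxBr VV VW WV WW subrr subr0.
Qed.

Lemma corner_subset k (V P : 'M[C]_k) : V *m P = P -> P *m V = P ->
  forall X, exists Y, P *m X *m P = V *m Y *m V.
Proof. by move=> VP PV X; exists (P *m X *m P); rewrite -{1}VP -{2}PV !mulmxA. Qed.

Lemma diag_blocks_sub0 k l (W : 'I_l -> 'M[C]_k) (X : 'M[C]_k) :
  (forall i, orth_proj (W i)) -> (forall i j, i != j -> W i *m W j = 0) ->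
  forall j, W j *m (X - \sum_i W i *m X *m W i) *m W j = 0.
Proof.
move=> pW oW j; have [WW _] := pW j.
rewrite mulmxBr mulmxBl mulmx_sumr mulmx_suml (bigD1 j) //= big1 => [|i ij].
  rewrite addr0 !mulmxA [W j *m W j]WW -[W j *m X *m W j *m W j]mulmxA.
  by rewrite [W j *m W j]WW subrr.
by rewrite !mulmxA oW 1?eq_sym // !mul0mx.
Qed.

Lemma diag_blocks_compl0 k l (W : 'I_l -> 'M[C]_k) (Y : 'M[C]_k) :
  (forall i, orth_proj (W i)) -> (forall i j, i != j -> W i *m W j = 0) ->
  forall i j, W j *m ((1%:M - W i) *m Y *m W i) *m W j = 0.
Proof.
move=> pW oW i j; have [<-|ij] := eqVneq i j.
  by rewrite !mulmxA orth_proj_mulC // !mul0mx.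
by rewrite -!mulmxA oW // !mulmx0.
Qed.

End OrthProj.

Section OrdCat.
Variables (T : Type) (l1 l2 : nat) (F1 : 'I_l1 -> T) (F2 : 'I_l2 -> T).

Definition ord_cat (i : 'I_(l1 + l2)) : T :=
  match split i with inl a => F1 a | inr b => F2 b end.

Lemma ord_cat_lshift a : ord_cat (lshift l2 a) = F1 a.
Proof. by rewrite /ord_cat (unsplitK (inl _ a)). Qed.

Lemma ord_cat_rshift b : ord_cat (rshift l1 b) = F2 b.
Proof. by rewrite /ord_cat (unsplitK (inr _ b)). Qed.

Lemma ord_catP (P : T -> Prop) :
  (forall a, P (F1 a)) -> (forall b, P (F2 b)) -> forall i, P (ord_cat i).
Proof. by move=> P1 P2 i; rewrite /ord_cat; case: (split i). Qed.

End OrdCat.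

Section PsdFactor.
Variable R : realType.
Local Notation C := R[i].

Definition outer_sum p (s : seq 'cV[C]_p) : 'M[C]_p := \sum_(h <- s) h *m adjmx h.

Lemma outer_sum_psd p (s : seq 'cV[C]_p) : psd (outer_sum s).
Proof.
rewrite /outer_sum; split.
  by rewrite /Defs.hermitian adjmx_sum; apply: eq_bigr => h _; rewrite adjmxM adjmxK.
move=> v; rewrite mulmx_sumr mulmx_suml summxE; apply: sumr_ge0 => h _.
have -> : adjmx v *m (h *m adjmx h) *m v = adjmx v *m h *m adjmx (adjmx v *m h).
  by rewrite adjmxM adjmxK !mulmxA.
by rewrite -trace_mx11 mxtrace_mul_adj_ge0.
Qed.

Lemma spectral_outer p (g : 'M[C]_p) : g \is normalmx ->
  let u j := adjmx (spectralmx g) *m delta_mx j (0 : 'I_1) in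
  g = \sum_j spectral_diag g 0 j *: (u j *m adjmx (u j)) /\
  forall j, (adjmx (u j) *m g *m u j) 0 0 = spectral_diag g 0 j.
Proof.
move=> /orthomx_spectralP; set P := spectralmx g; set d := spectral_diag g.
rewrite invmx_unitary ?spectral_unitarymx // => gE u.
have PP : P *m adjmx P = 1%:M by apply/unitarymxP/spectral_unitarymx.
split=> [|j].
  rewrite {1}gE diag_mx_sum_delta mulmx_sumr mulmx_suml; apply: eq_bigr => j _.
  rewrite /u adjmxM adjmxK adjmx_delta !mulmxA.
  by rewrite -[adjmx P *m _ *m delta_mx 0 j]mulmxA mul_delta_mx -scalemxAr -scalemxAl.
rewrite gE /u adjmxM adjmxK adjmx_delta !mulmxA -(mulmxA _ P (adjmx P)) PP mulmx1.
rewrite -(mulmxA _ P (adjmx P)) PP mulmx1 diag_mx_sum_delta mulmx_sumr mulmx_suml.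
rewrite summxE (bigD1 j) //= big1 ?addr0 => [|i ij].
  by rewrite -scalemxAr -scalemxAl !mul_delta_mx !mxE !eqxx mulr1.
rewrite -scalemxAr -scalemxAl !mul_delta_mx_cond eq_sym (negbTE ij).
by rewrite mulr0n mul0mx scaler0 mxE.
Qed.

Lemma psd_outer_sum p (g : 'M[C]_p) : psd g -> exists s, g = outer_sum s.
Proof.
move=> [hg pg]; have nm : g \is normalmx.
  by apply/normalmxP; change (g *m adjmx g = adjmx g *m g); rewrite hg.
pose u j := adjmx (spectralmx g) *m delta_mx j (0 : 'I_1).
pose d := spectral_diag g.
have [gE ugu] : g = \sum_j d 0 j *: (u j *m adjmx (u j)) /\
  forall j, (adjmx (u j) *m g *m u j) 0 0 = d 0 j := spectral_outer nm.
have d_ge0 j : 0 <= d 0 j by have := pg (u j); rewrite ugu.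
exists [seq sqrtC (d 0 j) *: u j | j <- enum 'I_p].
rewrite /outer_sum big_map big_enum {1}gE /=; apply: eq_bigr => j _.
rewrite adjmxZ -scalemxAl -scalemxAr scalerA.
by rewrite geC0_conj ?sqrtC_ge0 // -expr2 sqrtCK.
Qed.

End PsdFactor.

Section KrausMaps.
Variables (R : realType) (k m : nat) (s : seq 'M[R[i]]_(m, k)).

Definition kraus (X : 'M[R[i]]_k) : 'M[R[i]]_m := \sum_(A <- s) A *m X *m adjmx A.

Definition kraus_gram (X : 'M[R[i]]_k) : 'M[R[i]]_k :=
  \sum_(A <- s) adjmx A *m kraus X *m A.

Fact kraus_is_semilinear : semilinear kraus.
Proof.
split=> [c X|X Y]; rewrite /kraus ?scaler_sumr -?big_split; apply: eq_bigr => A _.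
  by rewrite -scalemxAr -scalemxAl.
by rewrite mulmxDr mulmxDl.
Qed.

Fact kraus_gram_is_semilinear : semilinear kraus_gram.
Proof.
have [krausZ krausD] := kraus_is_semilinear.
split=> [c X|X Y]; rewrite /kraus_gram ?scaler_sumr -?big_split; apply: eq_bigr => A _.
  by rewrite krausZ -scalemxAr -scalemxAl.
by rewrite krausD mulmxDr mulmxDl.
Qed.

End KrausMaps.

HB.instance Definition _ (R : realType) k m (s : seq 'M[R[i]]_(m, k)) :=
  GRing.isSemilinear.Build R[i] _ _ _ (kraus s) (kraus_is_semilinear s).
HB.instance Definition _ (R : realType) k m (s : seq 'M[R[i]]_(m, k)) :=
  GRing.isSemilinear.Build R[i] _ _ _ (kraus_gram s) (kraus_gram_is_semilinear s).

Section Kraus.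
Variables (R : realType) (k m : nat) (s : seq 'M[R[i]]_(m, k)).
Local Notation C := R[i].
Local Notation H := (kraus s).
Local Notation T := (kraus_gram s).

Lemma kraus_gram_sum I (r : seq I) (P : pred I) (F : I -> 'M[C]_k) :
  T (\sum_(i <- r | P i) F i) = \sum_(i <- r | P i) T (F i).
Proof. exact: linear_sum. Qed.

Lemma kraus_gramB X Y : T (X - Y) = T X - T Y.
Proof. exact: linearB. Qed.

Lemma kraus_gramE X :
  T X = \sum_(A <- s) \sum_(B <- s) adjmx A *m B *m X *m adjmx (adjmx A *m B).
Proof.
apply: eq_bigr => A _; rewrite mulmx_sumr mulmx_suml; apply: eq_bigr => B _.
by rewrite adjmxM adjmxK !mulmxA.
Qed.

Definition commutant (V : 'M[C]_k) :=
  {in s &, forall A B, adjmx A *m B *m V = V *m (adjmx A *m B)}.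

Definition corner_invariant (F : 'M[C]_k -> 'M[C]_k) (V : 'M[C]_k) :=
  forall X, exists Y, F (V *m X *m V) = V *m Y *m V.

Lemma commutant1 : commutant 1%:M.
Proof. by move=> A B _ _; rewrite mulmx1 mul1mx. Qed.

Lemma commutantM U V : commutant U -> commutant V -> commutant (U *m V).
Proof. by move=> cU cV A B sA sB; rewrite mulmxA cU // -mulmxA cV // mulmxA. Qed.

Lemma commutantB U V : commutant U -> commutant V -> commutant (U - V).
Proof. by move=> cU cV A B sA sB; rewrite mulmxBl mulmxBr cU // cV. Qed.

Lemma kraus_gram_mulmxl V X : commutant V -> T (V *m X) = V *m T X.
Proof.
move=> cV; rewrite !kraus_gramE mulmx_sumr; apply: eq_big_seq => A sA.
by rewrite mulmx_sumr; apply: eq_big_seq => B sB; rewrite !mulmxA cV ?mulmxA.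
Qed.

Lemma kraus_gram_mulmxr V X : commutant V -> T (X *m V) = T X *m V.
Proof.
move=> cV; rewrite !kraus_gramE mulmx_suml; apply: eq_big_seq => A sA.
rewrite mulmx_suml; apply: eq_big_seq => B sB.
by rewrite adjmxM adjmxK -!mulmxA [adjmx B *m (A *m V)]mulmxA cV // !mulmxA.
Qed.

Lemma commutant_corner_invariant V : commutant V -> corner_invariant T V.
Proof. by move=> cV X; exists (T X); rewrite kraus_gram_mulmxr // kraus_gram_mulmxl. Qed.

(* If T preserves the corner V M_k V, then (1 - V) T(V) (1 - V) = 0 is a sum of
   squares (1 - V) L V ((1 - V) L V)^*, so every L = A^* B maps V into V. *)
Lemma corner_invariant_commutant V :
  orth_proj V -> corner_invariant T V -> commutant V.
Proof.
move=> [VV aV] iV; set U := 1%:M - V.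
have aU : adjmx U = U by rewrite adjmxB adjmx1 aV.
have UV : U *m V = 0 by rewrite mulmxBl mul1mx VV subrr.
have UVL0 : forall A B, A \in s -> B \in s -> U *m (adjmx A *m B) *m V = 0.
  apply: mxtrace_sum2_mul_adj_eq0; have [Y TV] := iV 1%:M.
  rewrite mulmx1 VV in TV.
  suff <- : U *m T V *m U = \sum_(A <- s) \sum_(B <- s)
      U *m (adjmx A *m B) *m V *m adjmx (U *m (adjmx A *m B) *m V).
    by rewrite TV !mulmxA UV !mul0mx mxtrace0.
  rewrite kraus_gramE mulmx_sumr mulmx_suml; apply: eq_bigr => A _.
  rewrite mulmx_sumr mulmx_suml; apply: eq_bigr => B _.
  by rewrite !adjmxM aU aV !mulmxA -[_ *m V *m V]mulmxA VV.
have idU : V + U = 1%:M by rewrite addrC subrK.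
clearbody U.
move=> A B sA sB; transitivity (V *m (adjmx A *m B) *m V).
  by rewrite -{1}[adjmx A *m B]mul1mx -idU !mulmxDl UVL0 ?addr0.
have /(congr1 (@adjmx _ _ _)) := UVL0 B A sB sA.
rewrite !adjmxM adjmxK aU aV adjmx0 mulmxA => VLU.
by rewrite -[RHS]mulmx1 -idU mulmxDr VLU addr0.
Qed.

Lemma kraus_gram_positive : positive_map T.
Proof.
move=> X [hX pX]; split.
  rewrite /Defs.hermitian kraus_gramE adjmx_sum; apply: eq_bigr => A _.
  by rewrite adjmx_sum; apply: eq_bigr => B _; rewrite !adjmxM !adjmxK hX !mulmxA.
move=> v; rewrite kraus_gramE mulmx_sumr mulmx_suml summxE.
apply: sumr_ge0 => A _; rewrite mulmx_sumr mulmx_suml summxE; apply: sumr_ge0 => B _.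
by have := pX (adjmx (adjmx A *m B) *m v); rewrite adjmxM adjmxK !mulmxA.
Qed.

Lemma kraus_gram_selfadjoint : selfadjoint_map T.
Proof.
move=> X Y; rewrite !kraus_gramE adjmx_sum mulmx_suml mulmx_sumr !mxtrace_sum.
under eq_bigr do rewrite mulmx_suml mxtrace_sum.
under [RHS]eq_bigr do rewrite adjmx_sum mulmx_sumr mxtrace_sum.
rewrite [RHS]exchange_big /=; apply: eq_bigr => A _; apply: eq_bigr => B _.
rewrite !adjmxM !adjmxK.
by do 2![rewrite -!mulmxA [LHS]mxtrace_mulC !mulmxA].
Qed.

Lemma mxtrace_kraus_gram Y : \tr (T Y *m adjmx Y) = \tr (H Y *m adjmx (H Y)).
Proof.
rewrite {2}/kraus adjmx_sum mulmx_sumr /kraus_gram mulmx_suml !mxtrace_sum.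
by apply: eq_bigr => A _; rewrite !adjmxM adjmxK -!mulmxA mxtrace_mulC !mulmxA.
Qed.

Lemma kraus_gram_eq0 Y : T Y = 0 <-> H Y = 0.
Proof.
split=> [TY0|HY0]; last by rewrite /kraus_gram HY0 big1 // => A _; rewrite mulmx0 mul0mx.
by apply: mxtrace_mul_adj_eq0; rewrite -mxtrace_kraus_gram TY0 mul0mx mxtrace0.
Qed.

Lemma kraus_gram_commutant_eq0 D : commutant D -> T D = 0 ->
  forall A B, A \in s -> B \in s -> adjmx A *m B *m D = 0.
Proof.
move=> cD TD0; apply: mxtrace_sum2_mul_adj_eq0.
transitivity (\tr (T D *m adjmx D)); last by rewrite TD0 mul0mx mxtrace0.
rewrite kraus_gramE mulmx_suml !mxtrace_sum; apply: eq_big_seq => A sA.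
rewrite mulmx_suml !mxtrace_sum; apply: eq_big_seq => B sB.
by rewrite cD // adjmxM !mulmxA.
Qed.

Lemma irreducible_sub_proj W P : irreducible_on T W -> orth_proj P -> commutant P ->
  W *m P = P -> P *m W = P -> P = 0 \/ P = W.
Proof.
move=> irW pP cP WP PW; apply: irW => //; first exact: corner_subset.
exact: commutant_corner_invariant.
Qed.

Lemma irreducible_commuting_proj W V :
  orth_proj W -> commutant W -> irreducible_on T W ->
  orth_proj V -> commutant V -> V *m W = W *m V -> V *m W = 0 \/ V *m W = W.
Proof.
move=> [WW aW] cW irW [VV aV] cV VW; apply: irreducible_sub_proj => //.
- split; last by rewrite adjmxM aW aV VW.
  by rewrite mulmxA -(mulmxA V) -VW mulmxA VV -mulmxA WW.
- exact: commutantM.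
- by rewrite mulmxA -VW -mulmxA WW.
- by rewrite -mulmxA WW.
Qed.

(* The rank-one projection onto a common null vector of all A^* B is a
   T-invariant subprojection of W, hence all of W by irreducibility. *)
Lemma irreducible_annihilator W (u : 'cV[C]_k) :
  orth_proj W -> irreducible_on T W -> u != 0 -> W *m u = u ->
  (forall A B, A \in s -> B \in s -> adjmx A *m B *m u = 0) ->
  forall A B, A \in s -> B \in s -> adjmx A *m B *m W = 0.
Proof.
move=> [_ aW] irW nu Wu Lu; set P := rank1_proj u.
have LP A B : A \in s -> B \in s -> adjmx A *m B *m P = 0.
  by move=> sA sB; rewrite -scalemxAr mulmxA Lu // mul0mx scaler0.
have cP : commutant P.
  move=> A B sA sB; rewrite LP // -scalemxAl -mulmxA.
  suff -> : adjmx u *m (adjmx A *m B) = 0 by rewrite mulmx0 scaler0.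
  by rewrite -[LHS]adjmxK adjmxM [adjmx (adjmx A *m B)]adjmxM !adjmxK Lu // adjmx0.
have WP : W *m P = P by rewrite -scalemxAr mulmxA Wu.
have PW : P *m W = P by rewrite -scalemxAl -mulmxA -aW -adjmxM Wu.
case: (irreducible_sub_proj irW (rank1_orth_proj nu) cP WP PW) => [P0|<- //].
by have := rank1_projK nu; rewrite P0 mul0mx => u0; rewrite -u0 eqxx in nu.
Qed.

(* With D = (1 - W) V W, a vanishing T D forces either V to commute with W
   (then V W is 0 or W) or all A^* B to annihilate the range of D^*. *)
Lemma irreducible_block_decoupled W V Y :
  orth_proj W -> commutant W -> irreducible_on T W -> orth_proj V -> commutant V ->
  T ((1%:M - W) *m V *m W) = 0 -> V *m (W *m T Y *m W) *m (1%:M - V) = 0.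
Proof.
move=> pW cW irW pV cV; have [WW aW] := pW; have [_ aV] := pV.
set D := (1%:M - W) *m V *m W => TD0.
have cD : commutant D := commutantM (commutantM (commutantB commutant1 cW) cV) cW.
have LD0 := kraus_gram_commutant_eq0 cD TD0.
have [D0|nD0] := eqVneq D 0.
  have VWW : V *m W = W *m V *m W.
    by apply/eqP; rewrite -subr_eq0 -D0 /D !mulmxBl mul1mx.
  have VW : V *m W = W *m V.
    by have := congr1 (@adjmx _ _ _) VWW; rewrite !adjmxM aW aV mulmxA -VWW => ->.
  case: (irreducible_commuting_proj pW cW irW pV cV VW) => [VW0|VW_W].
    by rewrite !mulmxA VW0 !mul0mx.
  have WU : W *m (1%:M - V) = 0 by rewrite mulmxBr mulmx1 -VW VW_W subrr.
  by rewrite -!mulmxA WU !mulmx0.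
have [c nu] : exists c, col c (adjmx D) != 0.
  apply: col_neq0; apply: contraNneq nD0 => D0.
  by rewrite -[D]adjmxK D0 adjmx0.
have Lu A B : A \in s -> B \in s -> adjmx A *m B *m col c (adjmx D) = 0.
  move=> sA sB; rewrite colE mulmxA.
  suff -> : adjmx A *m B *m adjmx D = 0 by rewrite mul0mx.
  have -> : adjmx A *m B *m adjmx D = adjmx (D *m (adjmx B *m A)).
    by rewrite adjmxM adjmxM adjmxK.
  by rewrite -cD // LD0 // adjmx0.
have Wu : W *m col c (adjmx D) = col c (adjmx D).
  by rewrite colE mulmxA /D !adjmxM aW mulmxA WW.
have LW := irreducible_annihilator pW irW nu Wu Lu.
rewrite -kraus_gram_mulmxl // -kraus_gram_mulmxr // kraus_gramE.
rewrite big1_seq ?mulmx0 ?mul0mx // => A /andP[_ sA].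
rewrite big1_seq // => B /andP[_ sB].
by rewrite !mulmxA LW // !mul0mx.
Qed.

Definition irr_decomposition V l (W : 'I_l -> 'M[C]_k) :=
  [/\ forall i, orth_proj (W i), forall i j, i != j -> W i *m W j = 0,
      forall i, commutant (W i), forall i, irreducible_on T (W i) & \sum_i W i = V].

Lemma reducible_split V : orth_proj V -> ~ irreducible_on T V ->
  exists W, [/\ orth_proj W, commutant W, W <> 0, W <> V & V *m W = W].
Proof.
move=> [VV _] redV; apply: NNPP => noW; apply: redV => W pW sW iW.
have [->|W0] := eqVneq W 0; [by left | right].
have [<-|WV] := eqVneq W V; first by [].
case: noW; exists W; split=> //; first exact: corner_invariant_commutant.
- exact/eqP.
- exact/eqP.
by have [Y] := sW 1%:M; rewrite mulmx1 (proj1 pW) => ->; rewrite !mulmxA VV.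
Qed.

Lemma irr_decomposition_absorb V l (W : 'I_l -> 'M[C]_k) :
  irr_decomposition V W -> forall i, W i *m V = W i /\ V *m W i = W i.
Proof.
move=> [pW oW _ _ <-] i; have [WW _] := pW i.
rewrite mulmx_sumr mulmx_suml; split; rewrite (bigD1 i) //= big1 ?addr0 // => j ji.
  by rewrite oW // eq_sym.
by rewrite oW.
Qed.

Lemma irr_decomposition_cat P Q l1 l2 (W1 : 'I_l1 -> 'M[C]_k) (W2 : 'I_l2 -> 'M[C]_k) :
  irr_decomposition P W1 -> irr_decomposition Q W2 -> P *m Q = 0 ->
  irr_decomposition (P + Q) (ord_cat W1 W2).
Proof.
move=> dP dQ PQ; have [p1 o1 c1 i1 s1] := dP; have [p2 o2 c2 i2 s2] := dQ.
have W12 a b : W1 a *m W2 b = 0.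
  have [W1P _] := irr_decomposition_absorb dP a.
  have [_ QW2] := irr_decomposition_absorb dQ b.
  by rewrite -W1P -QW2 mulmxA -(mulmxA _ P) PQ mulmx0 mul0mx.
have W21 a b : W2 b *m W1 a = 0.
  by rewrite -(proj2 (p1 a)) -(proj2 (p2 b)) -adjmxM W12 adjmx0.
split; try exact: ord_catP.
- move=> i j; rewrite /ord_cat.
  case Ei: (split i) => [a|b]; case Ej: (split j) => [a'|b'] ij //.
    by apply: o1; apply: contraNneq ij => e; rewrite -(splitK i) -(splitK j) Ei Ej e.
  by apply: o2; apply: contraNneq ij => e; rewrite -(splitK i) -(splitK j) Ei Ej e.
- rewrite big_split_ord -s1 -s2; congr (_ + _); apply: eq_bigr => a _.
    exact: ord_cat_lshift.
  exact: ord_cat_rshift.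
Qed.

Lemma irr_decomposition_exists V : orth_proj V -> commutant V ->
  exists l (W : 'I_l -> 'M[C]_k), irr_decomposition V W.
Proof.
have [r] := ubnP (\rank V); elim: r V => // r IH V ltV pV cV.
case: (classic (irreducible_on T V)) => [irV|redV].
  by exists 1%N, (fun=> V); split=> // [i j|]; rewrite ?big_ord1 // !ord1 eqxx.
have [W [pW cW W0 WV VW]] := reducible_split pV redV.
have pVW := orth_projB pV pW VW.
have [l1 [W1 d1]] := IH W (leq_trans (orth_proj_ltrank pW pV VW WV) ltV) pW cW.
have ltVW : (\rank (V - W)%R < \rank V)%N.
  apply: orth_proj_ltrank => //; last first.
    by move=> VWV; apply: W0; rewrite -[W](subKr V) VWV subrr.
  by rewrite mulmxBr (proj1 pV) VW.
have [l2 [W2 d2]] := IH (V - W) (leq_trans ltVW ltV) pVW (commutantB cV cW).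
have WVW : W *m V = W by rewrite -(proj2 pW) -(proj2 pV) -adjmxM VW.
exists (l1 + l2)%N, (ord_cat W1 W2); rewrite -[V](subrK W) addrC.
by apply: irr_decomposition_cat => //; rewrite mulmxBr WVW (proj1 pW) subrr.
Qed.

Definition kraus_decoupled := forall V, orth_proj V -> commutant V ->
  forall X, H (V *m X *m (1%:M - V)) = 0.

Lemma completely_reducible_decoupled : completely_reducible T -> kraus_decoupled.
Proof.
move=> [_ [_ [l [W [pW [oW [iW [irW TR0]]]]]]]] V pV cV X.
have cW i : commutant (W i) := corner_invariant_commutant (pW i) (iW i).
have cU : commutant (1%:M - V) := commutantB commutant1 cV.
apply/kraus_gram_eq0; rewrite kraus_gram_mulmxr // kraus_gram_mulmxl //.
have -> : T X = \sum_i W i *m T X *m W i.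
  have /TR0 := diag_blocks0_orthogonal pW (diag_blocks_sub0 X pW oW).
  rewrite kraus_gramB kraus_gram_sum => /eqP; rewrite subr_eq0 => /eqP {1}->.
  apply: eq_bigr => i _; have cWi := cW i.
  by rewrite kraus_gram_mulmxr // kraus_gram_mulmxl.
rewrite mulmx_sumr mulmx_suml big1 // => i _.
apply: irreducible_block_decoupled => //; apply: TR0.
exact: diag_blocks0_orthogonal pW (diag_blocks_compl0 _ pW oW i).
Qed.

Lemma decoupled_completely_reducible : kraus_decoupled -> completely_reducible T.
Proof.
move=> dec; split; first exact: kraus_gram_selfadjoint.
split; first exact: kraus_gram_positive.
have p1 : orth_proj (1%:M : 'M[C]_k) by split; rewrite ?mulmx1 ?adjmx1.
have [l [W [pW oW cW irW sumW]]] := irr_decomposition_exists p1 commutant1.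
exists l, W; do 2!split=> //.
split=> [i|]; first exact: commutant_corner_invariant.
split=> // X XR.
have -> : X = \sum_i \sum_j W i *m X *m W j.
  under eq_bigr do rewrite -mulmx_sumr.
  by rewrite -!mulmx_suml sumW mul1mx mulmx1.
rewrite kraus_gram_sum big1 // => i _; rewrite kraus_gram_sum big1 // => j _.
have [<-|ij] := eqVneq i j; first by rewrite (orthogonal_diag_blocks0 (pW i) XR) linear0.
apply/kraus_gram_eq0.
have -> : W i *m X *m W j = W i *m (X *m W j) *m (1%:M - W i).
  by rewrite mulmxBr mulmx1 -!mulmxA oW 1?eq_sym // !mulmx0 subr0.
exact: dec.
Qed.

End Kraus.

Section KrausFamilies.
Variables (R : realType) (k m : nat).
Local Notation C := R[i].

Lemma kraus_cat (s1 s2 : seq 'M[C]_(m, k)) X :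
  kraus (s1 ++ s2) X = kraus s1 X + kraus s2 X.
Proof. exact: big_cat. Qed.

Lemma commutant_catl (s1 s2 : seq 'M[C]_(m, k)) V :
  commutant (s1 ++ s2) V -> commutant s1 V.
Proof. by move=> cV A B sA sB; apply: cV; rewrite mem_cat ?sA ?sB. Qed.

Lemma commutant_catr (s1 s2 : seq 'M[C]_(m, k)) V :
  commutant (s1 ++ s2) V -> commutant s2 V.
Proof. by move=> cV A B sA sB; apply: cV; rewrite mem_cat ?sA ?sB orbT. Qed.

Lemma kraus_decoupled_cat (s1 s2 : seq 'M[C]_(m, k)) :
  kraus_decoupled s1 -> kraus_decoupled s2 -> kraus_decoupled (s1 ++ s2).
Proof.
move=> d1 d2 V pV cV X; rewrite kraus_cat d1 ?d2 ?addr0 //.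
  exact: commutant_catr cV.
exact: commutant_catl cV.
Qed.

Lemma kraus_scale t (s : seq 'M[C]_(m, k)) X :
  kraus (map ( *:%R t) s) X = (t * t^*) *: kraus s X.
Proof.
rewrite /kraus big_map scaler_sumr; apply: eq_bigr => A _.
by rewrite adjmxZ -!scalemxAl -scalemxAr scalerA.
Qed.

Lemma commutant_scale t (s : seq 'M[C]_(m, k)) V : t != 0 ->
  commutant (map ( *:%R t) s) V -> commutant s V.
Proof.
move=> t0 cV A B sA sB; have tt0 : t^* * t != 0 by rewrite mulf_neq0 ?conjC_eq0.
have := cV _ _ (map_f _ sA) (map_f _ sB).
rewrite adjmxZ -scalemxAl -scalemxAr scalerA -scalemxAl -scalemxAr.
by move/(congr1 ( *:%R (t^* * t)^-1)); rewrite !scalerA mulVf // !scale1r.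
Qed.

Lemma kraus_decoupled_scale t (s : seq 'M[C]_(m, k)) :
  t != 0 -> kraus_decoupled s -> kraus_decoupled (map ( *:%R t) s).
Proof.
move=> t0 ds V pV cV X; rewrite kraus_scale ds ?scaler0 //.
exact: commutant_scale cV.
Qed.

Lemma delta2_not_decoupled (i0 i1 : 'I_k) (j0 j1 : 'I_m) : i0 != i1 -> j0 != j1 ->
  ~ kraus_decoupled [:: delta_mx j0 i0 + delta_mx j1 i1 : 'M[C]_(m, k)].
Proof.
move=> /negbTE i01 /negbTE j01 dec.
have i10 : (i1 == i0) = false by rewrite eq_sym.
have j10 : (j1 == j0) = false by rewrite eq_sym.
set A := delta_mx j0 i0 + delta_mx j1 i1 : 'M[C]_(m, k).
have aA : adjmx A = delta_mx i0 j0 + delta_mx i1 j1 by rewrite adjmxD !adjmx_delta.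
have AA : adjmx A *m A = delta_mx i0 i0 + delta_mx i1 i1.
  rewrite aA !(mulmxDl, mulmxDr) !mul_delta_mx_cond !eqxx j01 j10.
  by rewrite !mulr0n !mulr1n ?addr0 ?add0r.
pose V := delta_mx i0 i0 : 'M[C]_k.
have pV : orth_proj V by split; rewrite ?mul_delta_mx ?adjmx_delta.
have cV : commutant [:: A] V.
  move=> B B'; rewrite !inE => /eqP-> /eqP->; rewrite AA !(mulmxDl, mulmxDr).
  by rewrite !mul_delta_mx_cond !eqxx i01 i10 !mulr0n !mulr1n !addr0.
have := dec V pV cV (delta_mx i0 i1).
have -> : V *m delta_mx i0 i1 *m (1%:M - V) = delta_mx i0 i1.
  by rewrite mul_delta_mx mulmxBr mulmx1 mul_delta_mx_cond i10 mulr0n subr0.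
rewrite /kraus big_seq1 aA /A !(mulmxDl, mulmxDr) !mul_delta_mx_cond.
rewrite !eqxx i10 !mulr0n !mulr1n ?mul0mx ?addr0 ?add0r !mul_delta_mx_cond !eqxx i10.
rewrite !mulr0n !mulr1n ?add0r ?addr0.
by move/matrixP/(_ j0 j1); rewrite !mxE !eqxx /= => /eqP; rewrite oner_eq0.
Qed.

End KrausFamilies.

Lemma sum_pair (V : nmodType) (I J : finType) (F : I * J -> V) :
  \sum_(x : I * J) F x = \sum_i \sum_j F (i, j).
Proof. by rewrite pair_bigA; apply: eq_bigr => -[i j]. Qed.

Section Tensor.
Variables (R : realType) (k m : nat).
Local Notation C := R[i].
Local Notation idx := (@mxtens_index k m).

Lemma sum_mxtens_index (F : 'I_(k * m) -> C) :
  \sum_p F p = \sum_a \sum_b F (idx (a, b)).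
Proof.
rewrite (reindex idx) /=; first exact: sum_pair (fun ab => F (idx ab)).
by exists (@mxtens_unindex k m) => p _; rewrite (mxtens_indexK, mxtens_unindexK).
Qed.

Lemma mxtrace_delta_mul p (a a' : 'I_p) (X : 'M[C]_p) :
  \tr (delta_mx a a' *m X) = X a' a.
Proof.
rewrite /mxtrace (bigD1 a) //= big1 ?addr0 => [|i ia].
  rewrite mxE (bigD1 a') //= big1 ?addr0 => [|l la]; first by rewrite mxE !eqxx mul1r.
  by rewrite mxE eqxx (negbTE la) mul0r.
by rewrite mxE big1 // => l _; rewrite mxE (negbTE ia) mul0r.
Qed.

Lemma G_mxE (g : 'M[C]_(k * m)) X b b' :
  G_ g X b b' = \sum_a \sum_a' g (idx (a, b)) (idx (a', b')) * X a' a.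
Proof.
rewrite /G_ /Gdec /std_dec big_map big_enum /= summxE sum_pair sum_pair.
apply: eq_bigr => a _; apply: eq_bigr => a' _.
rewrite (bigD1 (b, b')) //= big1 ?addr0 => [|[c c'] /= ne].
  by rewrite !mxE !eqxx mulr1 -scalemxAl mxtraceZ mxtrace_delta_mul.
rewrite !mxE; case: (eqVneq c b) => [cb|]; last by rewrite mulr0.
case: (eqVneq c' b') => [cb'|]; last by rewrite andbF mulr0.
by move: ne; rewrite cb cb' eqxx.
Qed.

Lemma F_mxE (g : 'M[C]_(k * m)) Y a a' :
  F_ g Y a a' = \sum_b \sum_b' g (idx (a, b)) (idx (a', b')) * Y b' b.
Proof.
rewrite /F_ /Fdec /std_dec big_map big_enum /= summxE sum_pair.
rewrite (bigD1 (a, a')) //= [X in _ + X]big1 ?addr0 => [|[c c'] /= ne].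
  rewrite sum_pair; apply: eq_bigr => b _; apply: eq_bigr => b' _.
  by rewrite !mxE !eqxx mulr1 mxtrace_delta_mul mulrC.
apply: big1 => q _; rewrite !mxE; case: (eqVneq c a) => [ca|]; last by rewrite !mulr0.
case: (eqVneq c' a') => [ca'|]; last by rewrite andbF !mulr0.
by move: ne; rewrite ca ca' eqxx.
Qed.

(* h in C^k (x) C^m reshaped into an m x k matrix and conjugated entrywise;
   G_{h h^*} X is then the transpose of A X A^* for this A. *)
Definition kraus_of_vec (h : 'cV[C]_(k * m)) : 'M[C]_(m, k) :=
  \matrix_(b, a) (h (idx (a, b)) 0)^*.

Lemma outer_sum_mxE (s : seq 'cV[C]_(k * m)) p q :
  outer_sum s p q = \sum_(h <- s) h p 0 * (h q 0)^*.
Proof. by rewrite summxE; apply: eq_bigr => h _; rewrite mxE big_ord1 adjmxE. Qed.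

Lemma kraus_of_vec_G (s : seq 'cV[C]_(k * m)) X b b' :
  kraus (map kraus_of_vec s) X b b' = G_ (outer_sum s) X b' b.
Proof.
rewrite G_mxE /kraus big_map summxE.
under [RHS]eq_bigr do under eq_bigr do rewrite outer_sum_mxE mulr_suml.
under [LHS]eq_bigr do rewrite mxE.
under [LHS]eq_bigr do under eq_bigr do rewrite mxE mulr_suml.
rewrite exchange_big /=; apply: eq_bigr => l _.
rewrite exchange_big /=; apply: eq_bigr => c _.
by apply: eq_bigr => h _; rewrite adjmxE !mxE conjCK; ring.
Qed.

Lemma FG_kraus_gram (s : seq 'cV[C]_(k * m)) :
  F_ (outer_sum s) \o G_ (outer_sum s) = kraus_gram (map kraus_of_vec s).
Proof.
apply: functional_extensionality => X; apply/matrixP => a a' /=; rewrite F_mxE.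
under eq_bigr do under eq_bigr do rewrite -kraus_of_vec_G outer_sum_mxE mulr_suml.
rewrite /kraus_gram big_map summxE.
under [RHS]eq_bigr do rewrite mxE.
under [RHS]eq_bigr do under eq_bigr do rewrite mxE mulr_suml.
rewrite [LHS]exchange_big /=; under [LHS]eq_bigr do rewrite exchange_big /=.
rewrite [LHS]exchange_big /=; apply: eq_bigr => h _.
apply: eq_bigr => b' _; apply: eq_bigr => b _.
by rewrite adjmxE !mxE conjCK; ring.
Qed.

Lemma CR_outer_sum (s : seq 'cV[C]_(k * m)) :
  CR (outer_sum s) <-> kraus_decoupled (map kraus_of_vec s).
Proof.
rewrite /CR FG_kraus_gram; split=> [[_]|]; first exact: completely_reducible_decoupled.
by split; [exact: outer_sum_psd | exact: decoupled_completely_reducible].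
Qed.

(* For x, w nonzero, z = conj(w) (x) x satisfies z^* g z > 0, and z^* g z is the
   sum of the |w^* A x|^2 over the Kraus operators A of g. *)
Lemma posdef_kraus_of_vec (s : seq 'cV[C]_(k * m)) (x : 'cV[C]_k) (w : 'cV[C]_m) :
  posdef (outer_sum s) -> x != 0 -> w != 0 ->
  has (fun A => (adjmx w *m A *m x) 0 0 != 0) (map kraus_of_vec s).
Proof.
move=> [_ pd] nx nw; apply: contraT; rewrite -all_predC => /allP /= wAx0.
pose z : 'cV[C]_(k * m) :=
  \col_p ((w (mxtens_unindex p).2 0)^* * x (mxtens_unindex p).1 0).
have zE a b : z (idx (a, b)) 0 = (w b 0)^* * x a 0 by rewrite mxE mxtens_indexK.
have [a0 [i0 xa0]] := mx_neq0 nx; have [b0 [j0 wb0]] := mx_neq0 nw.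
rewrite !ord1 in xa0 wb0.
have nz : z != 0.
  apply/eqP => /matrixP /(_ (idx (a0, b0)) 0); rewrite zE mxE => /eqP.
  by rewrite mulf_eq0 conjC_eq0 (negbTE xa0) (negbTE wb0).
have zh h : (adjmx h *m z) 0 0 = (adjmx w *m kraus_of_vec h *m x) 0 0.
  rewrite mxE sum_mxtens_index mxE.
  under [RHS]eq_bigr do rewrite mxE mulr_suml.
  apply: eq_bigr => a _; apply: eq_bigr => b _; rewrite adjmxE zE adjmxE !mxE; ring.
have := pd z nz; rewrite /outer_sum mulmx_sumr mulmx_suml summxE big1_seq ?ltxx //.
move=> h /andP[_ sh]; rewrite !mulmxA -(mulmxA _ (adjmx h)) mxE big_ord1 zh.
by have /negPn/eqP -> := wAx0 _ (map_f kraus_of_vec sh); rewrite mulr0.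
Qed.

(* A commutant projection V other than 0 and 1 would give nonzero x = V x and
   y = (1 - V) y; positive definiteness, used twice, yields Kraus operators A, B
   with y^* A^* B x != 0, although A^* B x = V A^* B x is orthogonal to y. *)
Lemma posdef_decoupled (s : seq 'cV[C]_(k * m)) :
  posdef (outer_sum s) -> kraus_decoupled (map kraus_of_vec s).
Proof.
move=> pd V [VV aV] cV X.
have [m0|m_gt0] := posnP m.
  by apply/matrixP => i; move: (ltn_ord i); rewrite {2}m0.
have [->|V0] := eqVneq V 0; first by rewrite !mul0mx linear0.
have [->|V1] := eqVneq V 1%:M; first by rewrite subrr mulmx0 linear0.
exfalso; have [c xc] := col_neq0 V0.
have UV0 : 1%:M - V != 0 by rewrite subr_eq0 eq_sym.
have [c' yc] := col_neq0 UV0.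
set x := col c V in xc; set y := col c' (1%:M - V) in yc.
have Vx : V *m x = x by rewrite /x !colE mulmxA VV.
have yV : adjmx y *m V = 0.
  by rewrite -aV -adjmxM /y colE mulmxA mulmxBr mulmx1 VV subrr mul0mx adjmx0.
pose w0 : 'cV[C]_m := delta_mx (Ordinal m_gt0) 0.
have nw0 : w0 != 0.
  apply/eqP => /matrixP /(_ (Ordinal m_gt0) 0).
  by rewrite !mxE !eqxx => /eqP; rewrite oner_eq0.
have /hasP [A sA wAy] := posdef_kraus_of_vec pd yc nw0.
have nAy : A *m y != 0 by apply: contraNneq wAy => Ay0; rewrite -mulmxA Ay0 mulmx0 mxE.
have /hasP [B sB /eqP] := posdef_kraus_of_vec pd xc nAy; apply.
have LVx : adjmx A *m (B *m x) = V *m (adjmx A *m (B *m x)).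
  by rewrite -{1}Vx !mulmxA cV // !mulmxA.
by rewrite adjmxM -!mulmxA LVx mulmxA yV mul0mx mxE.
Qed.

Lemma kraus_of_vecZ t (h : 'cV[C]_(k * m)) :
  kraus_of_vec (t *: h) = t^* *: kraus_of_vec h.
Proof. by apply/matrixP => b a; rewrite !mxE rmorphM. Qed.

Lemma kraus_of_vec_delta2 (i0 i1 : 'I_k) (j0 j1 : 'I_m) :
  kraus_of_vec (delta_mx (idx (i0, j0)) 0 + delta_mx (idx (i1, j1)) 0) =
  delta_mx j0 i0 + delta_mx j1 i1.
Proof.
apply/matrixP => b a; rewrite !mxE !(inj_eq (can_inj (@mxtens_indexK k m))).
by rewrite !xpair_eqE !eqxx !andbT rmorphD !rmorph_nat ![(b == _) && _]andbC.
Qed.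

End Tensor.

Section Cone.
Variables (R : realType) (k m : nat).
Local Notation C := R[i].

Lemma posdef_psd p (g : 'M[C]_p) : posdef g -> psd g.
Proof.
move=> [hg pd]; split => // v; have [->|nv] := eqVneq v 0; last exact/ltW/pd.
by rewrite mulmx0 mxE.
Qed.

Lemma posdef_CR (g : 'M[C]_(k * m)) : posdef g -> CR g.
Proof.
move=> pd; have [s gE] := psd_outer_sum (posdef_psd pd).
by rewrite gE; apply/CR_outer_sum/posdef_decoupled; rewrite -gE.
Qed.

Lemma CR_scale (g : 'M[C]_(k * m)) c : CR g -> 0 < c -> CR (c *: g).
Proof.
move=> crg c0; have [s gE] := psd_outer_sum crg.1.
have sc0 : 0 <= sqrtC c by rewrite sqrtC_ge0 ltW.
have -> : c *: g = outer_sum (map ( *:%R (sqrtC c)) s).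
  rewrite gE /outer_sum big_map scaler_sumr; apply: eq_bigr => h _.
  by rewrite adjmxZ -scalemxAl -scalemxAr scalerA geC0_conj // -expr2 sqrtCK.
apply/CR_outer_sum; rewrite -map_comp (eq_map (kraus_of_vecZ _)) map_comp.
apply: kraus_decoupled_scale; first by rewrite geC0_conj // sqrtC_eq0 lt0r_neq0.
by apply/CR_outer_sum; rewrite -gE.
Qed.

Lemma CR_add (g d : 'M[C]_(k * m)) : CR g -> CR d -> CR (g + d).
Proof.
move=> crg crd; have [s1 gE] := psd_outer_sum crg.1; have [s2 dE] := psd_outer_sum crd.1.
have -> : g + d = outer_sum (s1 ++ s2) by rewrite gE dE /outer_sum big_cat.
apply/CR_outer_sum; rewrite map_cat; apply: kraus_decoupled_cat; apply/CR_outer_sum.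
  by rewrite -gE.
by rewrite -dE.
Qed.

Lemma psd_add_posdef p (r : 'M[C]_p) t : psd r -> 0 < t -> posdef (r + t *: 1%:M).
Proof.
move=> [hr pr] t0; split.
  by rewrite /Defs.hermitian adjmxD adjmxZ adjmx1 hr geC0_conj // ltW.
move=> v nv.
have -> : (adjmx v *m (r + t *: 1%:M) *m v) 0 0 = (adjmx v *m r *m v) 0 0 + t * sqnorm v.
  by rewrite mulmxDr mulmxDl -scalemxAr mulmx1 -scalemxAl /sqnorm !mxE.
apply: ltr_wpDl (pr v) _; apply: mulr_gt0 t0 _.
by rewrite lt0r sqnorm_eq0 nv sqnorm_ge0.
Qed.

Lemma CR_dense (r : 'M[C]_(k * m)) e : psd r -> 0 < e ->
  exists g, CR g /\ forall a b, `|g a b - r a b| < e.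
Proof.
move=> psdr e0; have e20 : 0 < e / 2 by rewrite divr_gt0.
exists (r + (e / 2) *: 1%:M); split; first exact/posdef_CR/psd_add_posdef.
move=> a b; rewrite !mxE addrAC subrr add0r.
case: (a == b); rewrite ?mulr1n ?mulr0n ?mulr1 ?mulr0 ?normr0 //.
rewrite ger0_norm ?ltW // ltr_pdivrMr // ltr_pMr //.
by rewrite [X in _ < X](_ : 2 = 1 + 1) // ltrDl.
Qed.

Lemma CR_not_closed : (2 <= k)%N -> (2 <= m)%N ->
  exists r : 'M[C]_(k * m),
    (forall e, 0 < e -> exists g, CR g /\ forall a b, `|g a b - r a b| < e) /\ ~ CR r.
Proof.
move=> k2 m2; have k0 := ltnW k2; have m0 := ltnW m2.
pose i0 : 'I_k := Ordinal k0; pose i1 : 'I_k := Ordinal k2.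
pose j0 : 'I_m := Ordinal m0; pose j1 : 'I_m := Ordinal m2.
pose h : 'cV[C]_(k * m) :=
  delta_mx (mxtens_index (i0, j0)) 0 + delta_mx (mxtens_index (i1, j1)) 0.
exists (outer_sum [:: h]); split=> [e e0|]; first exact: CR_dense (outer_sum_psd _) e0.
move/CR_outer_sum; rewrite /= kraus_of_vec_delta2.
exact: delta2_not_decoupled.
Qed.

End Cone.

Theorem mainTheorem7 (R : realType) (k m : nat) :
  (forall g : 'M[R[i]]_(k * m), posdef g -> CR g) /\
  (forall (g : 'M[R[i]]_(k * m)) (c : R[i]), CR g -> 0 < c -> CR (c *: g)) /\
  (forall g d : 'M[R[i]]_(k * m), CR g -> CR d -> CR (g + d)) /\
  (forall (r : 'M[R[i]]_(k * m)) (e : R[i]), state r -> 0 < e ->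
     exists g, CR g /\ forall a b, `|g a b - r a b| < e) /\
  ((2 <= k)%N -> (2 <= m)%N ->
     exists r : 'M[R[i]]_(k * m),
       (forall e : R[i], 0 < e -> exists g, CR g /\ forall a b, `|g a b - r a b| < e)
       /\ ~ CR r).
Proof.
split; first exact: posdef_CR.
split; first exact: CR_scale.
split; first exact: CR_add.
split; first exact: CR_dense.
exact: CR_not_closed.
Qed.
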